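(* Let $\varphi : X \to X$ be a morphism in $\mathscr{C}$ and let $\kappa : K \to X$ be a kernel of $\varphi$. Then $\varphi$ has a core inverse if and only if $\varphi$ has a cokernel $\lambda : X \to L$ such that both $\kappa\lambda : K \to L$ and $\varphi^{*}\varphi^{3}+\kappa^{*}\kappa : X \to X$ are invertible. In this case, $\gamma=\lambda(\kappa\lambda)^{-1} : X \to K$ is a cokernel of $\varphi$, $\varphi^{\mathrm{core}}\varphi+\gamma\kappa=1_X$, and $$\varphi^{\mathrm{core}}=\varphi^{2}(\varphi^{*}\varphi^{3}+\kappa^{*}\kappa)^{-1}\varphi^{*}.$$
   Context: $\mathscr{C}$ is an additive category with an involution $*$: a map on morphisms sending $\varphi : X\to Y$ to $\varphi^* : Y \to X$ such that $(\varphi^* )^*=\varphi$, $(\varphi\psi)^*=\psi^*\varphi^*$ and $(\varphi+\phi)^*=\varphi^*+\phi^*$. Composition is written left to right: for $\varphi : X\to Y$ and $\psi : Y\to Z$, $\varphi\psi : X \to Z$ means ''first $\varphi$, then $\psi$''; powers $\varphi^n$ of an endomorphism are the $n$-fold composites. A kernel of $\varphi : X\to Y$ is a morphism $\kappa : K\to X$ with $\kappa\varphi=0$ such that every $\alpha : M\to X$ with $\alpha\varphi=0$ factors uniquely as $\alpha=\alpha'\kappa$. A cokernel of $\varphi$ is a morphism $\lambda : Y\to L$ with $\varphi\lambda=0$ such that every $\beta : Y\to M$ with $\varphi\beta=0$ factors uniquely as $\beta=\lambda\beta'$. A morphism is invertible if it has a two-sided inverse. For $\varphi : X\to X$, a core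 inverse of $\varphi$ is a morphism $\chi : X\to X$ with $(\varphi\chi)^*=\varphi\chi$, $\varphi\chi^2=\chi$ and $\chi\varphi^2=\varphi$. It is unique when it exists and is denoted $\varphi^{\mathrm{core}}$. *)

From HB Require Import structures.
From mathcomp Require Import all_boot all_order all_algebra.
Set Implicit Arguments. Unset Strict Implicit. Unset Printing Implicit Defensive.
Import GRing.Theory.
Local Open Scope ring_scope.

(* An additive category with an involution.  Composition is written
   left to right: [cmp f g] for f : X -> Y, g : Y -> Z means "first f, then g". *)
Record AddInvCat := {
  Ob :> Type;
  Mor : Ob -> Ob -> zmodType;
  cmp : forall X Y Z : Ob, Mor X Y -> Mor Y Z -> Mor X Z;
  idm : forall X : Ob, Mor X X;
  star : forall X Y : Ob, Mor X Y -> Mor Y X;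
  cmpA : forall (X Y Z W : Ob) (f : Mor X Y) (g : Mor Y Z) (h : Mor Z W),
      cmp f (cmp g h) = cmp (cmp f g) h;
  cmp1l : forall (X Y : Ob) (f : Mor X Y), cmp (idm X) f = f;
  cmp1r : forall (X Y : Ob) (f : Mor X Y), cmp f (idm Y) = f;
  cmpDl : forall (X Y Z : Ob) (f f' : Mor X Y) (g : Mor Y Z),
      cmp (f + f') g = cmp f g + cmp f' g;
  cmpDr : forall (X Y Z : Ob) (f : Mor X Y) (g g' : Mor Y Z),
      cmp f (g + g') = cmp f g + cmp f g';
  has_zero_object : exists Z : Ob, idm Z = 0;
  has_biproducts : forall X Y : Ob, exists (P : Ob) (i1 : Mor X P) (i2 : Mor Y P)
      (p1 : Mor P X) (p2 : Mor P Y),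
      [/\ cmp i1 p1 = idm X, cmp i2 p2 = idm Y, cmp i1 p2 = 0, cmp i2 p1 = 0
        & cmp p1 i1 + cmp p2 i2 = idm P];
  starK : forall (X Y : Ob) (f : Mor X Y), star (star f) = f;
  starM : forall (X Y Z : Ob) (f : Mor X Y) (g : Mor Y Z),
      star (cmp f g) = cmp (star g) (star f);
  starD : forall (X Y : Ob) (f g : Mor X Y), star (f + g) = star f + star g
}.

Arguments cmp {_ _ _ _}.
Arguments star {_ _ _}.
Arguments idm {_}.

Section Defs.
Variable C : AddInvCat.

Fixpoint pw (X : C) (f : Mor X X) (n : nat) : Mor X X :=
  match n with O => idm X | S m => cmp f (pw f m) end.

Definition is_kernel (X Y K : C) (phi : Mor X Y) (kappa : Mor K X) : Prop :=
  cmp kappa phi = 0 /\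
  forall (M : C) (alpha : Mor M X), cmp alpha phi = 0 ->
    exists! alpha' : Mor M K, cmp alpha' kappa = alpha.

Definition is_cokernel (X Y L : C) (phi : Mor X Y) (lam : Mor Y L) : Prop :=
  cmp phi lam = 0 /\
  forall (M : C) (beta : Mor Y M), cmp phi beta = 0 ->
    exists! beta' : Mor L M, cmp lam beta' = beta.

Definition is_inverse (X Y : C) (f : Mor X Y) (g : Mor Y X) : Prop :=
  cmp f g = idm X /\ cmp g f = idm Y.

Definition invertible (X Y : C) (f : Mor X Y) : Prop :=
  exists g : Mor Y X, is_inverse f g.

Definition is_core_inverse (X : C) (phi chi : Mor X X) : Prop :=
  [/\ star (cmp phi chi) = cmp phi chi,
      cmp phi (cmp chi chi) = chi &
      cmp chi (cmp phi phi) = phi].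

End Defs.

From HB Require Import structures.
From mathcomp Require Import all_boot all_order all_algebra.
Import GRing.Theory.
Local Open Scope ring_scope.

Set Implicit Arguments.
Unset Strict Implicit.
Unset Printing Implicit Defensive.

(* If [chi] is the core inverse of [phi], then
   [idm - chi phi] kills [phi], so it factors as [gamma kappa] through the
   kernel; this [gamma] is a retraction of [kappa] and a cokernel of [phi], and
   [chi^3 chi^* + gamma gamma^*] inverts [phi^* phi^3 + kappa^* kappa].
   Conversely, let [v] invert [phi^* phi^3 + kappa^* kappa] and let [gamma] be
   a retraction of [kappa] killing [phi] (such as [lam (kappa lam)^-1]).  Then
   [s = phi^2 v phi^*] solves the normal equation [phi^* phi s = phi^*], so
   [phi s] is a hermitian projection with [phi s phi = phi]; finally
   [s phi^2 - phi] is killed by both [phi] and [gamma], hence vanishes because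
   [kappa] is a kernel of [phi] split by [gamma].  Uniqueness of core inverses
   yields the formula for [phi^core]. *)

Local Notation "f ** g" := (cmp f g) (at level 40, left associativity).

Section AddInvCatTheory.
Variable C : AddInvCat.

Lemma cmpBl (X Y Z : C) (f f' : Mor X Y) (g : Mor Y Z) :
  (f - f') ** g = f ** g - f' ** g.
Proof. by apply: (addIr (f' ** g)); rewrite -cmpDl !subrK. Qed.

Lemma cmpBr (X Y Z : C) (f : Mor X Y) (g g' : Mor Y Z) :
  f ** (g - g') = f ** g - f ** g'.
Proof. by apply: (addIr (f ** g')); rewrite -cmpDr !subrK. Qed.

Lemma cmp0l (X Y Z : C) (g : Mor Y Z) : (0 : Mor X Y) ** g = 0.
Proof. by rewrite -(subrr (0 : Mor X Y)) cmpBl subrr. Qed.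

Lemma cmp0r (X Y Z : C) (f : Mor X Y) : f ** (0 : Mor Y Z) = 0.
Proof. by rewrite -(subrr (0 : Mor Y Z)) cmpBr subrr. Qed.

Lemma starB (X Y : C) (f g : Mor X Y) : star (f - g) = star f - star g.
Proof. by apply: (addIr (star g)); rewrite -starD !subrK. Qed.

Lemma star0 (X Y : C) : star (0 : Mor X Y) = 0.
Proof. by rewrite -(subrr (0 : Mor X Y)) starB subrr. Qed.

Lemma star1 (X : C) : star (idm X) = idm X.
Proof. by have := starM (idm X) (star (idm X)); rewrite cmp1l !starK cmp1l. Qed.

Lemma pw2 (X : C) (f : Mor X X) : pw f 2 = f ** f.
Proof. by rewrite /= cmp1r. Qed.

Lemma pw3 (X : C) (f : Mor X X) : pw f 3 = f ** f ** f.
Proof. by rewrite /= cmp1r cmpA. Qed.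

Lemma is_inverse_sym (X Y : C) (f : Mor X Y) (g : Mor Y X) :
  is_inverse f g -> is_inverse g f.
Proof. by case. Qed.

End AddInvCatTheory.

Ltac cmp_prefix x l :=
  lazymatch l with
  | cmp ?g ?f => let p := cmp_prefix x g in constr:(cmp p f)
  | _ => constr:(cmp x l)
  end.

(* Rewrite with [H : l = r] in a goal normalised to left-associated
   composites, also at occurrences [x ** l] hidden by associativity. *)
Ltac arewrite H :=
  lazymatch type of H with
  | @eq _ ?l ?r =>
    lazymatch type of l with
    | context [@Mor ?C ?A _] =>
      let E := fresh "E" in
      assert (E : forall (Y : Ob C) (x : @Mor C Y A),
          ltac:(lazymatch goal with [ x : _ |- _ ] =>
                  let p := cmp_prefix x l in exact (p = cmp x r) end))
        by (intros; apply: etrans _ (congr1 (cmp _) H); by rewrite !cmpA);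
      progress rewrite ?cmpA ?H ?E ?(cmpA, cmp1l, cmp1r, cmp0l, cmp0r);
      clear E
    end
  end.

Section Kernels.
Variable C : AddInvCat.

Section Kernel.
Variables (X Y K : C) (phi : Mor X Y) (kappa : Mor K X).
Hypothesis kerk : is_kernel phi kappa.

Lemma kernel_cmp0 : kappa ** phi = 0.
Proof. by case: kerk. Qed.

Lemma kernel_factor (M : C) (alpha : Mor M X) :
  alpha ** phi = 0 -> exists alpha', alpha' ** kappa = alpha.
Proof.
by case: kerk => _ /(_ M alpha) fac /fac [alpha' [<- _]]; exists alpha'.
Qed.

Lemma kernel_mono (M : C) (beta beta' : Mor M K) :
  beta ** kappa = beta' ** kappa -> beta = beta'.
Proof.
move=> e; case: kerk => _ /(_ M (beta ** kappa)) fac.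
have [alpha [_ alpha_uniq]] : exists! alpha, alpha ** kappa = beta ** kappa.
  by apply: fac; rewrite -cmpA kernel_cmp0 cmp0r.
by rewrite -(alpha_uniq beta) // (alpha_uniq beta').
Qed.

Lemma kernel_retraction_eq0 (gamma : Mor X K) (M : C) (x : Mor M X) :
  kappa ** gamma = idm K -> x ** phi = 0 -> x ** gamma = 0 -> x = 0.
Proof.
move=> kg /kernel_factor [x' <-]; rewrite -cmpA kg cmp1r => ->.
exact: cmp0l.
Qed.

End Kernel.

Section Cokernel.
Variables (W X L : C) (phi : Mor W X) (lam : Mor X L).
Hypothesis cokl : is_cokernel phi lam.

Lemma cokernel_cmp_inverse (K : C) (u : Mor L K) (w : Mor K L) :
  is_inverse u w -> is_cokernel phi (lam ** u).
Proof.
case: cokl => pl fac [uw wu]; split; first by rewrite cmpA pl cmp0l.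
move=> M beta /fac [beta' [lb beta'_uniq]]; exists (w ** beta'); split.
  by rewrite -cmpA (cmpA u) uw cmp1l.
move=> y luy; rewrite (beta'_uniq (u ** y)) ?cmpA ?wu ?cmp1l //.
Qed.

End Cokernel.

Lemma split_cokernelP (W X K : C) (phi : Mor W X) (kappa : Mor K X)
    (gamma : Mor X K) :
  kappa ** gamma = idm K -> phi ** gamma = 0 ->
  is_cokernel phi gamma <->
  (forall (M : C) (beta : Mor X M),
     phi ** beta = 0 -> gamma ** kappa ** beta = beta).
Proof.
move=> kg pg; split=> [[_ fac] M beta /fac [beta' [<- _]] | fix_ker].
  by rewrite -(cmpA gamma) (cmpA kappa) kg cmp1l.
split=> // M beta /fix_ker gkb; exists (kappa ** beta).
split; first by rewrite cmpA.
by move=> y <-; rewrite cmpA kg cmp1l.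
Qed.

End Kernels.

Section CoreInverse.
Variable C : AddInvCat.

Lemma herm_inner_of_normal_eq (X Y : C) (a : Mor X Y) (s : Mor Y X) :
  star a ** (a ** s) = star a -> star (a ** s) = a ** s /\ a ** s ** a = a.
Proof.
move=> normal.
have proj : star (a ** s) ** (a ** s) = star (a ** s).
  by rewrite {1}starM -cmpA normal -starM.
have herm : star (a ** s) = a ** s.
  by have := congr1 star proj; rewrite starM !starK proj.
split=> //; have := congr1 star normal.
by rewrite starM starK herm.
Qed.

Section Basics.
Variables (X : C) (phi chi : Mor X X).
Hypothesis core : is_core_inverse phi chi.

Lemma core_inverse_herm : star (phi ** chi) = phi ** chi.
Proof. by case: core. Qed.

Lemma core_inverse_star : star chi ** star phi = phi ** chi.
Proof. by rewrite -starM core_inverse_herm. Qed.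

Lemma core_inverse_phi_chi2 : phi ** chi ** chi = chi.
Proof. by case: core => _ e _; rewrite -cmpA e. Qed.

Lemma core_inverse_chi_phi2 : chi ** phi ** phi = phi.
Proof. by case: core => _ _ e; rewrite -cmpA e. Qed.

Lemma core_inverse_inner : phi ** chi ** phi = phi.
Proof.
by rewrite -{2}core_inverse_chi_phi2; arewrite core_inverse_phi_chi2;
  arewrite core_inverse_chi_phi2.
Qed.

Lemma core_inverse_outer : chi ** phi ** chi = chi.
Proof.
by rewrite -{2}core_inverse_phi_chi2; arewrite core_inverse_chi_phi2;
  arewrite core_inverse_phi_chi2.
Qed.

Lemma kernel_cmp_core_inverse (K : C) (kappa : Mor K X) :
  is_kernel phi kappa -> kappa ** chi = 0.
Proof.
by move=> kerk; rewrite -core_inverse_phi_chi2; arewrite (kernel_cmp0 kerk).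
Qed.

End Basics.

Lemma core_inverse_cokernel_complement (X K : C) (phi chi : Mor X X)
    (kappa : Mor K X) (gamma : Mor X K) :
  is_kernel phi kappa -> is_core_inverse phi chi -> is_cokernel phi gamma ->
  kappa ** gamma = idm K -> chi ** phi + gamma ** kappa = idm X.
Proof.
move=> kerk core cokg kg.
have pg : phi ** gamma = 0 by case: cokg.
have gk : gamma ** kappa = idm X - chi ** phi.
  have pc : phi ** (idm X - chi ** phi) = 0.
    by rewrite cmpBr cmp1r cmpA (core_inverse_inner core) subrr.
  rewrite -((split_cokernelP kg pg).1 cokg _ _ pc) cmpBr cmp1r.
  by arewrite (kernel_cmp_core_inverse core kerk); rewrite subr0.
by rewrite gk addrC subrK.
Qed.

Lemma core_inverse_uniq (X : C) (phi chi chi' : Mor X X) :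
  is_core_inverse phi chi -> is_core_inverse phi chi' -> chi = chi'.
Proof.
move=> core core'.
have proj_eq : phi ** chi = phi ** chi'.
  have absorb : phi ** chi' ** (phi ** chi) = phi ** chi.
    by rewrite cmpA (core_inverse_inner core').
  rewrite -(core_inverse_herm core) -{1}absorb starM.
  by rewrite (core_inverse_herm core) (core_inverse_herm core') cmpA
    (core_inverse_inner core).
rewrite -(core_inverse_outer core) -cmpA proj_eq.
rewrite -{1}(core_inverse_phi_chi2 core'); arewrite (core_inverse_chi_phi2 core).
by arewrite (core_inverse_phi_chi2 core').
Qed.

Section CoreInverseToGram.
Variables (X K : C) (phi chi : Mor X X) (kappa : Mor K X).
Hypotheses (kerk : is_kernel phi kappa) (core : is_core_inverse phi chi).

Lemma core_inverse_retraction : exists gamma : Mor X K,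
  [/\ gamma ** kappa = idm X - chi ** phi, kappa ** gamma = idm K
    & phi ** gamma = 0].
Proof.
have [gamma gk] : exists gamma, gamma ** kappa = idm X - chi ** phi.
  apply: (kernel_factor kerk).
  by rewrite cmpBl cmp1l (core_inverse_chi_phi2 core) subrr.
exists gamma; split => //; apply: (kernel_mono kerk).
all: rewrite -cmpA gk cmpBr cmp1r.
- by rewrite cmp1l cmpA (kernel_cmp_core_inverse core kerk) cmp0l subr0.
- by rewrite cmpA (core_inverse_inner core) subrr cmp0l.
Qed.

Lemma core_inverse_gram_inverse (gamma : Mor X K) :
  gamma ** kappa = idm X - chi ** phi -> kappa ** gamma = idm K ->
  phi ** gamma = 0 ->
  is_inverse (star phi ** pw phi 3 + star kappa ** kappa)
             (chi ** chi ** chi ** star chi + gamma ** star gamma).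
Proof.
move=> gk kg pg; have kc := kernel_cmp_core_inverse core kerk.
have gks : star gamma ** star kappa = idm K by rewrite -starM kg star1.
rewrite /is_inverse pw3 !cmpDl !cmpDr; split.
- have e1 : star phi ** phi ** chi ** star chi = star (chi ** phi).
    transitivity (star (chi ** phi ** chi ** phi)).
      by rewrite !starM; arewrite (core_inverse_star core).
    by rewrite (core_inverse_outer core).
  arewrite (core_inverse_phi_chi2 core); arewrite kc; arewrite pg; arewrite kg.
  by rewrite e1 -starM gk starB star1 addr0 add0r addrC subrK.
- have ks : star chi ** star kappa = 0 by rewrite -starM kc star0.
  have gs : star gamma ** star phi = 0 by rewrite -starM pg star0.
  arewrite (core_inverse_star core); arewrite (core_inverse_chi_phi2 core).
  arewrite ks; arewrite gs; arewrite gks.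
  by rewrite gk addr0 add0r addrC subrK.
Qed.

Lemma core_inverse_cokernel_gram : exists (L : C) (lam : Mor X L),
  [/\ is_cokernel phi lam, invertible (kappa ** lam)
    & invertible (star phi ** pw phi 3 + star kappa ** kappa)].
Proof.
have [gamma [gk kg pg]] := core_inverse_retraction.
exists K, gamma; split.
- apply/(split_cokernelP kg pg) => M beta pb.
  by rewrite gk cmpBl cmp1l -cmpA pb cmp0r subr0.
- by rewrite /invertible kg; exists (idm K); rewrite /is_inverse cmp1l.
- exact: ex_intro _ _ (core_inverse_gram_inverse gk kg pg).
Qed.

End CoreInverseToGram.

Section GramToCoreInverse.
Variables (X K : C) (phi : Mor X X) (kappa : Mor K X) (gamma : Mor X K)
  (v : Mor X X).
Hypotheses (kerk : is_kernel phi kappa) (kg : kappa ** gamma = idm K)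
  (pg : phi ** gamma = 0)
  (gv : is_inverse (star phi ** pw phi 3 + star kappa ** kappa) v).

Lemma gram_inverse_star_kernel : v ** star kappa = gamma.
Proof.
case: gv => _ vg; rewrite -[RHS]cmp1l -vg pw3 cmpDr !cmpDl.
by arewrite pg; arewrite kg; rewrite add0r.
Qed.

Lemma gram_inverse_normal_power :
  v ** star phi ** phi ** phi ** phi = idm X - gamma ** kappa.
Proof.
case: gv => _ vg; rewrite -vg pw3 cmpDr !cmpA.
by rewrite -(cmpA v) gram_inverse_star_kernel addrK.
Qed.

Lemma gram_inverse_normal_eq :
  star phi ** (phi ** (phi ** phi ** v ** star phi)) = star phi.
Proof.
set h := idm X - gamma ** kappa.
have ph : phi ** h = phi by rewrite cmpBr cmp1r cmpA pg cmp0l subr0.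
have kh : kappa ** h = 0 by rewrite cmpBr cmp1r cmpA kg cmp1l subrr.
have power_v : star phi ** phi ** phi ** phi ** v = star h.
  have hk : star h ** star kappa = 0 by rewrite -starM kh star0.
  have hp : star h ** star phi = star phi by rewrite -starM ph.
  case: gv => gramv _; rewrite -[RHS]cmp1r -gramv pw3 cmpDl cmpDr.
  by arewrite hk; arewrite hp; rewrite addr0.
by arewrite power_v; rewrite -starM ph.
Qed.

Lemma gram_inverse_core_inverse :
  is_core_inverse phi (pw phi 2 ** (v ** star phi)).
Proof.
rewrite pw2 cmpA; set s := phi ** phi ** v ** star phi.
have sE : s = phi ** phi ** v ** star phi by []; clearbody s.
have [herm inner] : star (phi ** s) = phi ** s /\ phi ** s ** phi = phi.
  by apply: herm_inner_of_normal_eq; rewrite sE gram_inverse_normal_eq.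
have power_phi : phi ** v ** star phi ** phi ** phi ** phi = phi.
  arewrite gram_inverse_normal_power.
  by rewrite cmpBr cmp1r cmpA pg cmp0l subr0.
split=> //.
- by rewrite cmpA {2}sE; arewrite inner.
- apply/eqP; rewrite -subr_eq0; apply/eqP.
  apply: (kernel_retraction_eq0 kerk kg); rewrite cmpBl sE.
  + by arewrite power_phi; rewrite subrr.
  + by arewrite pg; rewrite subrr.
Qed.

End GramToCoreInverse.

End CoreInverse.

Theorem theorem2p3 (C : AddInvCat) (X K : C) (phi : Mor X X) (kappa : Mor K X) :
  is_kernel phi kappa ->
  ((exists chi : Mor X X, is_core_inverse phi chi) <->
   (exists (L : C) (lam : Mor X L),
       [/\ is_cokernel phi lam, invertible (cmp kappa lam)
         & invertible (cmp (star phi) (pw phi 3) + cmp (star kappa) kappa)]))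
  /\
  (forall chi : Mor X X, is_core_inverse phi chi ->
   forall (L : C) (lam : Mor X L), is_cokernel phi lam ->
   forall u : Mor L K, is_inverse (cmp kappa lam) u ->
   forall v : Mor X X,
     is_inverse (cmp (star phi) (pw phi 3) + cmp (star kappa) kappa) v ->
     [/\ is_cokernel phi (cmp lam u),
         cmp chi phi + cmp (cmp lam u) kappa = idm X
       & chi = cmp (pw phi 2) (cmp v (star phi))]).
Proof.
move=> kerk.
have retraction (L : C) (lam : Mor X L) (u : Mor L K) :
    is_cokernel phi lam -> is_inverse (kappa ** lam) u ->
    kappa ** (lam ** u) = idm K /\ phi ** (lam ** u) = 0.
  by move=> [pl _] [klu _]; rewrite !cmpA klu pl cmp0l.
split.
  split=> [[chi core] | [L [lam [cokl [u klu] [v gv]]]]].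
    exact: core_inverse_cokernel_gram kerk core.
  have [kg pg] := retraction L lam u cokl klu.
  exists (pw phi 2 ** (v ** star phi)).
  exact: gram_inverse_core_inverse kerk kg pg gv.
move=> chi core L lam cokl u klu v gv.
have [kg pg] := retraction L lam u cokl klu.
have cokg := cokernel_cmp_inverse cokl (is_inverse_sym klu).
split=> //.
- exact: core_inverse_cokernel_complement kerk core cokg kg.
- exact: core_inverse_uniq core (gram_inverse_core_inverse kerk kg pg gv).
Qed.
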